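(* Let $(M,\circ,\mathrm{OR})$ be a free $\mathbb{D}$-module of rank 3 with scalar product and orientation. The Lie algebra $so(3,\mathbb{D})$ of $\circ$-antisymmetric $\mathbb{D}$-linear operators on $M$ (with the commutator bracket) is canonically isomorphic to the Lie algebra $(M,-\times)$ (bracket $[x,y]=-x\times y$) via $x\mapsto -x\times\cdot$, and to $se(3)$, the Lie algebra of screw fields on the Euclidean space $E$ with the Lie bracket of vector fields, via the map $\beta$ composed with this isomorphism.
   Context: $\mathbb{D}=\{a+\epsilon b: a,b\in\mathbb{R}\}$, $\epsilon^2=0$, $\mathfrak{Re},\mathfrak{Du}$ real and dual parts. Scalar product: symmetric $\mathbb{D}$-bilinear $\circ:M\times M\to\mathbb{D}$ with $\mathfrak{Re}(x\circ x)\ge0$, equality iff $x\in\epsilon M$. Orientation: one of the two classes of ordered bases, $\{b'_j=A_{jk}b_k\}\sim\{b_k\}$ iff $\det\mathfrak{Re}(A)>0$. Cross product: $x\times y=x^iy^j\epsilon_{ijk}m_k$ in any positive orthonormal basis $\{m_i\}$. $V=M/\epsilon M$ with quotient $\pi$ and inner product induced by $\mathfrak{Re}(\cdot\circ\cdot)$. $E$ is the set of real 3-dimensional subspaces $P\subset M$ with $\mathfrak{Du}(x\circ y)=0$ on $P$ and $P\cap\epsilon M=\{0\}$; it is a Euclidean affine space over $V$ with $B-A:=d^ke_k$ where $e^B_i=e^A_i+\epsilon\,\epsilon_{ijk}d^ke^A_j$, $\{e_i\}$ a positive orthonormal basis of $V$ and $e_i^P$ the unique lift of $e_i$ lying in $P$.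 A screw field on $E$ is a map $\mathcal{s}:E\to V$ with $\mathcal{s}(Q)-\mathcal{s}(P)=s\times(Q-P)$ for some $s\in V$; $\beta:M\to\{\text{screw fields}\}$ is $\beta(z)(A)=\mathcal{s}(A)$ where $z=a+\epsilon\mathcal{s}(A)$, $a\in A$. *)

From HB Require Import structures.
From mathcomp Require Import all_boot all_order all_algebra.
From mathcomp Require Import all_classical all_reals.
From mathcomp Require Import topology normedtype.
Set Implicit Arguments. Unset Strict Implicit. Unset Printing Implicit Defensive.
Import Order.TTheory GRing.Theory Num.Theory.
Import numFieldNormedType.Exports.
Local Open Scope ring_scope.
Local Open Scope classical_set_scope.

(* Dual numbers  D = { a + eps b : a, b in R },  eps^2 = 0.            *)
Record dual (R : Type) := Dual { re : R; du : R }.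

Definition dual_to_prod R (x : dual R) := (re x, du x).
Definition prod_to_dual R (p : R * R) := Dual p.1 p.2.
Lemma dual_prodK R : cancel (@dual_to_prod R) (@prod_to_dual R).
Proof. by case. Qed.

HB.instance Definition _ (R : choiceType) :=
  Choice.copy (dual R) (can_type (@dual_prodK R)).

Section DualRing.
Variable R : comNzRingType.
Implicit Types x y z : dual R.

Definition dzero : dual R := Dual 0 0.
Definition dopp x := Dual (- re x) (- du x).
Definition dadd x y := Dual (re x + re y) (du x + du y).
Definition done : dual R := Dual 1 0.
Definition dmul x y := Dual (re x * re y) (re x * du y + du x * re y).

Lemma daddA : associative dadd.
Proof. by move=> [? ?] [? ?] [? ?]; rewrite /dadd /= !addrA. Qed.
Lemma daddC : commutative dadd.
Proof. by move=> [? ?] [? ?]; rewrite /dadd /= [X in Dual X _]addrC [X in Dual _ X]addrC. Qed.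
Lemma dadd0 : left_id dzero dadd.
Proof. by move=> [? ?]; rewrite /dadd /= !add0r. Qed.
Lemma daddN : left_inverse dzero dopp dadd.
Proof. by move=> [? ?]; rewrite /dadd /= !addNr. Qed.

HB.instance Definition _ := GRing.isZmodule.Build (dual R) daddA daddC dadd0 daddN.

Lemma dmulA : associative dmul.
Proof.
move=> [a b] [c d] [e f]; rewrite /dmul /=; congr Dual; first by rewrite mulrA.
by rewrite !mulrDr !mulrDl !mulrA addrA.
Qed.
Lemma dmulC : commutative dmul.
Proof.
move=> [a b] [c d]; rewrite /dmul /=; congr Dual; first by rewrite mulrC.
by rewrite addrC [a * d]mulrC [b * c]mulrC.
Qed.
Lemma dmul1 : left_id done dmul.
Proof. by move=> [a b]; rewrite /dmul /= !mul1r mul0r addr0. Qed.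
Lemma dmulDl : left_distributive dmul dadd.
Proof.
move=> [a b] [c d] [e f]; rewrite /dmul /dadd /=; congr Dual; first by rewrite mulrDl.
by rewrite !mulrDl -!addrA; congr (_ + _); rewrite addrCA.
Qed.
Lemma done_neq0 : done != dzero.
Proof. by apply/eqP => -[] /eqP; rewrite oner_eq0. Qed.

HB.instance Definition _ :=
  GRing.Zmodule_isComNzRing.Build (dual R) dmulA dmulC dmul1 dmulDl done_neq0.

End DualRing.

(* Generic (classical) description operator: some x with P x if one exists,
   the default x0 otherwise.  Used only for objects the paper asserts to be
   uniquely determined. *)
Definition the (T : Type) (x0 : T) (P : T -> Prop) : T :=
  match pselect (exists x, P x) with
  | left h => projT1 (cid h)
  | right _ => x0
  end.

Section Geometry.
Variable R : realType.
Local Notation D := (dual R).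

Definition dR (r : R) : D := Dual r 0.
Definition deps : D := Dual 0 1.

(* Levi-Civita symbol epsilon_{ijk} on indices {0,1,2} *)
Definition levi (i j k : 'I_3) : R :=
  ((i%:R - j%:R) * (j%:R - k%:R) * (k%:R - i%:R)) / 2.

Variable M : lmodType D.

Definition is_basis (b : 'I_3 -> M) : Prop :=
  (forall x : M, exists c : 'I_3 -> D, x = \sum_i c i *: b i) /\
  (forall c : 'I_3 -> D, \sum_i c i *: b i = 0 -> forall i, c i = 0).

Definition free_rank3 : Prop := exists b, is_basis b.

Definition same_orientation (b b' : 'I_3 -> M) : Prop :=
  exists A : 'M[D]_3, (forall j, b' j = \sum_k A j k *: b k) /\
                      0 < \det (map_mx (@re R) A).

Definition is_orientation (OR : set ('I_3 -> M)) : Prop :=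
  exists b, is_basis b /\ OR = [set b' | is_basis b' /\ same_orientation b b'].

Definition epsM : set M := [set x | exists y, x = deps *: y].

Variable sp : M -> M -> D.

Definition is_scalar_product : Prop :=
  (forall x y, sp x y = sp y x) /\
  (forall (a : D) x y z, sp (a *: x + y) z = a * sp x z + sp y z) /\
  (forall x, 0 <= re (sp x x)) /\
  (forall x, re (sp x x) = 0 <-> epsM x).

Definition orthonormal (m : 'I_3 -> M) : Prop :=
  forall i j, sp (m i) (m j) = (i == j)%:R.

Definition pos_orthonormal (OR : set ('I_3 -> M)) (m : 'I_3 -> M) : Prop :=
  OR m /\ orthonormal m.

Definition cross (m : 'I_3 -> M) (x y : M) : M :=
  \sum_i \sum_j \sum_k (sp x (m i) * sp y (m j) * dR (levi i j k)) *: m k.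

Definition ad (m : 'I_3 -> M) (x : M) : M -> M := fun y => - cross m x y.

Definition is_so3 (f : M -> M) : Prop :=
  (forall (a : D) x y, f (a *: x + y) = a *: f x + f y) /\
  (forall x y, sp (f x) y = - sp x (f y)).

(* ---- V = M / eps M, as the set of cosets x + eps M ---- *)
Definition coset (x : M) : set M := [set y | epsM (y - x)].
Definition V := {S : set M | exists x, S = coset x}.
Definition piV (x : M) : V := exist _ (coset x) (ex_intro _ x erefl).
Definition reprV (v : V) : M := the 0 (fun x => piV x = v).

Definition vadd (u v : V) : V := piV (reprV u + reprV v).
Definition vsub (u v : V) : V := piV (reprV u - reprV v).
Definition vscale (r : R) (u : V) : V := piV (dR r *: reprV u).
Definition vdot (u v : V) : R := re (sp (reprV u) (reprV v)).
Definition vnorm (u : V) : R := Num.sqrt (vdot u u).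
Definition vcomb (c : 'I_3 -> R) (e : 'I_3 -> V) : V :=
  piV (\sum_k dR (c k) *: reprV (e k)).

Definition pos_orthonormal_V (OR : set ('I_3 -> M)) (e : 'I_3 -> V) : Prop :=
  (forall i j, vdot (e i) (e j) = (i == j)%:R) /\
  exists b, OR b /\ exists A : 'M[R]_3,
    0 < \det A /\ forall j, e j = vcomb (fun k => A j k) (fun k => piV (b k)).

Definition vcross (e : 'I_3 -> V) (u v : V) : V :=
  vcomb (fun k => \sum_i \sum_j vdot u (e i) * vdot v (e j) * levi i j k) e.

Definition real_span (p : 'I_3 -> M) : set M :=
  [set x | exists c : 'I_3 -> R, x = \sum_i dR (c i) *: p i].
Definition real_indep (p : 'I_3 -> M) : Prop :=
  forall c : 'I_3 -> R, \sum_i dR (c i) *: p i = 0 -> forall i, c i = 0.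

Definition is_point (P : set M) : Prop :=
  (exists p, real_indep p /\ P = real_span p) /\
  (forall x y, P x -> P y -> du (sp x y) = 0) /\
  (forall x, P x -> epsM x -> x = 0).

Definition E := {P : set M | is_point P}.

(* the unique lift of v in V lying in P *)
Definition liftE (P : E) (v : V) : M := the 0 (fun x => proj1_sig P x /\ piV x = v).

Definition dvec (e : 'I_3 -> V) (B A : E) : 'I_3 -> R :=
  the (fun _ => 0) (fun d => forall i,
    liftE B (e i) = liftE A (e i) +
      deps *: \sum_j \sum_k dR (levi i j k * d k) *: liftE A (e j)).
Definition diffE (e : 'I_3 -> V) (B A : E) : V := vcomb (dvec e B A) e.

Definition transl (e : 'I_3 -> V) (P : E) (v : V) : E :=
  the P (fun Q => diffE e Q P = v).

Definition is_screw (e : 'I_3 -> V) (s : E -> V) : Prop :=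
  exists r : V, forall P Q, vsub (s Q) (s P) = vcross e r (diffE e Q P).

Definition vderiv (e : 'I_3 -> V) (Y : E -> V) (P : E) (v w : V) : Prop :=
  (fun t : R => vnorm (vsub (vsub (Y (transl e P (vscale t v))) (Y P)) (vscale t w))
                / `|t|) @ (0 : R)^' --> (0 : R).

Definition lie_bracket (e : 'I_3 -> V) (X Y Z : E -> V) : Prop :=
  forall P, exists a b, vderiv e Y P (X P) a /\ vderiv e X P (Y P) b /\ Z P = vsub a b.

Definition beta (z : M) (A : E) : V :=
  the (piV 0) (fun v => exists a x, proj1_sig A a /\ piV x = v /\ z = a + deps *: x).

End Geometry.

Arguments liftE [R M] sp P v.
Arguments dvec [R M] sp e B A.
Arguments diffE [R M] sp e B A.
Arguments transl [R M] sp e P v.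
Arguments is_screw [R M] sp e s.
Arguments vderiv [R M] sp e Y P v w.
Arguments lie_bracket [R M] sp e X Y Z.
Arguments beta [R M] sp z A.

(* In an orthonormal basis, [- x \times .] acts on coordinates through the Levi-Civita symbol,
   so the so(3) identities are coordinate identities, and an antisymmetric operator is recovered
   from its three off-diagonal entries. Every point P of E carries the orthonormal frame lifting
   e, and the frame of Q is the frame of P rotated infinitesimally by eps times the skew matrix of
   Q - P. Comparing the dual parts of the coordinates of z in the two frames shows that beta z is
   the screw field with resultant pi z. Screw fields are affine, so their derivatives are exact
   and the bracket is a coordinate identity, once the orientation hypotheses show that every
   lifted frame is positive and hence defines the same cross product as m. *)
From Pilot Require Import Defs.
From HB Require Import structures.
From mathcomp Require Import all_boot all_order all_algebra.
From mathcomp Require Import all_classical all_reals.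
From mathcomp Require Import topology normedtype.
From mathcomp Require Import ring lra.
Set Implicit Arguments. Unset Strict Implicit. Unset Printing Implicit Defensive.
Import Order.TTheory GRing.Theory Num.Theory.
Import numFieldNormedType.Exports.
Local Open Scope ring_scope.
Local Open Scope classical_set_scope.

Lemma the_spec (T : Type) (x0 : T) (P : T -> Prop) :
  (exists x, P x) -> P (the x0 P).
Proof. by move=> exP; rewrite /the; case: pselect => // h; exact: projT2 (cid h). Qed.

Lemma exist_eq (A : Type) (Q : A -> Prop) (a b : A) (Qa : Q a) (Qb : Q b) :
  a = b -> exist Q a Qa = exist Q b Qb.
Proof. by move=> eq_ab; subst; congr exist; exact: Prop_irrelevance. Qed.

Definition o0 : 'I_3 := @Ordinal 3 0 isT.
Definition o1 : 'I_3 := @Ordinal 3 1 isT.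
Definition o2 : 'I_3 := @Ordinal 3 2 isT.

Lemma ord3P (i : 'I_3) : [\/ i = o0, i = o1 | i = o2].
Proof.
by case: i => [[|[|[|//]]] Hi]; [constructor 1 | constructor 2 | constructor 3]; apply/val_inj.
Qed.

Ltac case3 i := case: (ord3P i) => ->.

Lemma eq_o3E : ((o0 == o1) = false) * ((o0 == o2) = false) * ((o1 == o0) = false)
  * ((o1 == o2) = false) * ((o2 == o0) = false) * ((o2 == o1) = false).
Proof. by []. Qed.

Lemma sum3E (T : nmodType) (F : 'I_3 -> T) : \sum_i F i = F o0 + F o1 + F o2.
Proof. by rewrite !big_ord_recl big_ord0 addr0 addrA; congr (F _ + F _ + F _); apply/val_inj. Qed.

Lemma det3E (T : comNzRingType) (A : 'M[T]_3) : \det A =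
  A o0 o0 * A o1 o1 * A o2 o2 + A o0 o1 * A o1 o2 * A o2 o0 + A o0 o2 * A o1 o0 * A o2 o1
  - A o0 o0 * A o1 o2 * A o2 o1 - A o0 o1 * A o1 o0 * A o2 o2 - A o0 o2 * A o1 o1 * A o2 o0.
Proof.
rewrite (expand_det_row _ o0) sum3E /cofactor.
rewrite !(expand_det_row _ ord0) !big_ord_recl !big_ord0 /cofactor !det_mx11 !mxE /=.
(* index A through nat so that the [lift]s of the minors compute *)
have [f Af] : exists f : nat -> nat -> T, forall i j : 'I_3, A i j = f i j.
  by exists (fun i j => A (inord i) (inord j)) => i j; rewrite !inord_val.
by rewrite !Af /= /bump /=; ring.
Qed.

Lemma sum_delta (T : pzSemiRingType) (I : finType) (f : I -> T) j :
  \sum_i (i == j)%:R * f i = f j.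
Proof. by rewrite (bigD1 j) //= eqxx mul1r big1 ?addr0 // => i /negbTE ->; rewrite mul0r. Qed.

Lemma sum_delta_scale (T : pzRingType) (V : lmodType T) (I : finType) (f : I -> V) j :
  \sum_i ((i == j)%:R : T) *: f i = f j.
Proof. by rewrite (bigD1 j) //= eqxx scale1r big1 ?addr0 // => i /negbTE ->; rewrite scale0r. Qed.

Lemma leviE (R : realType) (i j k : 'I_3) : levi R i j k =
  match val i, val j, val k with
  | 0, 1, 2 | 1, 2, 0 | 2, 0, 1 => 1
  | 0, 2, 1 | 2, 1, 0 | 1, 0, 2 => -1
  | _, _, _ => 0
  end.
Proof. by case3 i; case3 j; case3 k; rewrite /levi /=; lra. Qed.

Section DualRing.
Variable R : comNzRingType.
Local Notation D := (dual R).
Implicit Types x y : D.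

Lemma dual_eq x y : re x = re y -> du x = du y -> x = y.
Proof. by case: x => a b; case: y => c d /= -> ->. Qed.

Lemma reD x y : re (x + y) = re x + re y. Proof. by []. Qed.
Lemma duD x y : du (x + y) = du x + du y. Proof. by []. Qed.
Lemma reN x : re (- x) = - re x. Proof. by []. Qed.
Lemma duN x : du (- x) = - du x. Proof. by []. Qed.
Lemma reM x y : re (x * y) = re x * re y. Proof. by []. Qed.
Lemma duM x y : du (x * y) = re x * du y + du x * re y. Proof. by []. Qed.
Lemma re0 : re (0 : D) = 0. Proof. by []. Qed.
Lemma du0 : du (0 : D) = 0. Proof. by []. Qed.
Lemma re1 : re (1 : D) = 1. Proof. by []. Qed.
Lemma du1 : du (1 : D) = 0. Proof. by []. Qed.
Lemma re_nat k : re (k%:R : D) = k%:R.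
Proof. by elim: k => // k IH; rewrite !mulrS reD IH. Qed.
Lemma du_nat k : du (k%:R : D) = 0.
Proof. by elim: k => // k IH; rewrite !mulrS duD IH addr0. Qed.
Lemma re_sum (I : Type) (r : seq I) (P : pred I) (F : I -> D) :
  re (\sum_(i <- r | P i) F i) = \sum_(i <- r | P i) re (F i).
Proof. exact: (big_morph _ reD re0). Qed.
Lemma du_sum (I : Type) (r : seq I) (P : pred I) (F : I -> D) :
  du (\sum_(i <- r | P i) F i) = \sum_(i <- r | P i) du (F i).
Proof. exact: (big_morph _ duD du0). Qed.

Lemma re_det3 (U : 'M[D]_3) : re (\det U) = \det (map_mx (@re R) U).
Proof. by rewrite !det3E !mxE !(reD, reN, reM). Qed.

End DualRing.

Section DualReal.
Variable R : realType.
Local Notation D := (dual R).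
Implicit Types x y : D.

Lemma re_dR (r : R) : re (dR r) = r. Proof. by []. Qed.
Lemma du_dR (r : R) : du (dR r) = 0. Proof. by []. Qed.
Lemma re_deps : re (deps R) = 0. Proof. by []. Qed.
Lemma du_deps : du (deps R) = 1. Proof. by []. Qed.

Definition dualE := (reD, duD, reN, duN, reM, duM, re0, du0, re1, du1, re_dR, du_dR,
   re_deps, du_deps, re_nat, du_nat, re_sum, du_sum).

Lemma dRD (r s : R) : dR (r + s) = dR r + dR s. Proof. by apply: dual_eq; rewrite /= ?addr0. Qed.
Lemma dRM (r s : R) : dR (r * s) = dR r * dR s.
Proof. by apply: dual_eq; rewrite /= ?(mulr0, mul0r, addr0). Qed.
Lemma dRN (r : R) : dR (- r) = - dR r. Proof. by apply: dual_eq; rewrite /= ?oppr0. Qed.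
Lemma dR0 : dR (0 : R) = 0. Proof. by []. Qed.
Lemma dR1 : dR (1 : R) = 1. Proof. by []. Qed.
Lemma dRN1 : dR (-1 : R) = -1. Proof. by rewrite dRN. Qed.
Lemma dR_nat k : dR (k%:R : R) = k%:R. Proof. by apply: dual_eq; rewrite /= ?re_nat ?du_nat. Qed.
Lemma dR_sum (I : Type) (r : seq I) (P : pred I) (F : I -> R) :
  dR (\sum_(i <- r | P i) F i) = \sum_(i <- r | P i) dR (F i).
Proof. exact: (big_morph _ dRD dR0). Qed.

Lemma dual_decomp x : x = dR (re x) + deps R * dR (du x).
Proof. by apply: dual_eq; rewrite /= !(mul0r, mulr0, addr0, add0r, mul1r). Qed.

Lemma dual_eqN x : x = - x -> x = 0.
Proof.
move=> xN; apply: dual_eq; [have := congr1 (@re R) xN | have := congr1 (@du R) xN];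
  rewrite /= => ?; lra.
Qed.

Lemma dual_sqr_eq1 x : x * x = 1 -> 0 < re x -> x = 1.
Proof.
case: x => a b /= xx1 a_gt0.
have /= := congr1 (@re R) xx1; have /= := congr1 (@du R) xx1.
move=> du_eq re_eq; have a1 : a = 1 by nra.
have b0 : b = 0.
  by move: du_eq; rewrite a1 mul1r mulr1 => /eqP; rewrite -mulr2n mulrn_eq0 => /eqP.
by rewrite a1 b0.
Qed.

Lemma sum_delta_eps_mul (a b : 'I_3 -> R) i j :
  \sum_k (((i == k)%:R + deps R * dR (a k)) * ((j == k)%:R + deps R * dR (b k))) =
  (i == j)%:R + deps R * dR (b i + a j).
Proof.
by apply: dual_eq; rewrite !sum3E; case3 i; case3 j; rewrite ?eq_o3E ?eqxx !dualE /=; ring.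
Qed.

End DualReal.

Section LeviCivita.
Variable R : realType.

Definition skew (d : 'I_3 -> R) i j := \sum_k levi R i j k * d k.

Lemma skew_antisym d i j : skew d i j + skew d j i = 0.
Proof. by case3 i; case3 j; rewrite /skew !sum3E !leviE /=; ring. Qed.

Lemma skew_inj d d' : (forall i j, skew d i j = skew d' i j) -> d = d'.
Proof.
move=> eq_skew; apply/funext => k; case3 k;
  [move: (eq_skew o1 o2) | move: (eq_skew o2 o0) | move: (eq_skew o0 o1)];
  rewrite /skew !sum3E !leviE /=; lra.
Qed.

Lemma antisym_skew (W : 'I_3 -> 'I_3 -> R) : (forall i j, W i j + W j i = 0) ->
  exists d, forall i j, W i j = skew d i j.
Proof.
move=> W_anti; exists (fun k => if k == o0 then W o1 o2 else if k == o1 then W o2 o0 else W o0 o1).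
move=> i j; move: (W_anti o0 o0) (W_anti o0 o1) (W_anti o0 o2).
move: (W_anti o1 o1) (W_anti o1 o2) (W_anti o2 o2).
by case3 i; case3 j; rewrite /skew !sum3E !leviE /=; lra.
Qed.

End LeviCivita.

Section ScalarProduct.
Variable R : realType.
Local Notation D := (dual R).
Variable M : lmodType D.
Variable sp : M -> M -> D.
Hypothesis sp_is_scalar_product : is_scalar_product sp.
Implicit Types x y z : M.

Lemma spC x y : sp x y = sp y x. Proof. by case: sp_is_scalar_product. Qed.

Lemma sp_linear a x y z : sp (a *: x + y) z = a * sp x z + sp y z.
Proof. by case: sp_is_scalar_product => _ []. Qed.

Lemma sp0l z : sp 0 z = 0.
Proof.
have := sp_linear 1 0 0 z; rewrite scale1r !addr0 mul1r.
by move=> /(congr1 (fun t => t - sp 0 z)); rewrite addrK subrr.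
Qed.
Lemma spDl x y z : sp (x + y) z = sp x z + sp y z.
Proof. by rewrite -[x]scale1r sp_linear mul1r scale1r. Qed.
Lemma spZl a x z : sp (a *: x) z = a * sp x z.
Proof. by rewrite -[a *: x]addr0 sp_linear sp0l addr0. Qed.
Lemma spNl x z : sp (- x) z = - sp x z.
Proof. by rewrite -scaleN1r spZl mulN1r. Qed.
Lemma spBl x y z : sp (x - y) z = sp x z - sp y z.
Proof. by rewrite spDl spNl. Qed.
Lemma sp0r z : sp z 0 = 0. Proof. by rewrite spC sp0l. Qed.
Lemma spDr x y z : sp z (x + y) = sp z x + sp z y. Proof. by rewrite !(spC z) spDl. Qed.
Lemma spZr a x z : sp z (a *: x) = a * sp z x. Proof. by rewrite !(spC z) spZl. Qed.
Lemma spNr x z : sp z (- x) = - sp z x. Proof. by rewrite !(spC z) spNl. Qed.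
Lemma spBr x y z : sp z (x - y) = sp z x - sp z y. Proof. by rewrite !(spC z) spBl. Qed.
Lemma sp_suml (I : Type) (r : seq I) (P : pred I) (F : I -> M) z :
  sp (\sum_(i <- r | P i) F i) z = \sum_(i <- r | P i) sp (F i) z.
Proof. exact: (big_morph (sp^~ z) (fun x y => spDl x y z) (sp0l z)). Qed.
Lemma sp_sumr (I : Type) (r : seq I) (P : pred I) (F : I -> M) z :
  sp z (\sum_(i <- r | P i) F i) = \sum_(i <- r | P i) sp z (F i).
Proof. by rewrite spC sp_suml; apply: eq_bigr => i _; rewrite spC. Qed.

Definition spE := (spDl, spDr, spZl, spZr, spNl, spNr, spBl, spBr, sp0l, sp0r).

Lemma re_sp_real_comb (p : 'I_3 -> M) (c : 'I_3 -> R) y :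
  re (sp (\sum_i dR (c i) *: p i) y) = \sum_i c i * re (sp (p i) y).
Proof. by rewrite sp_suml re_sum; apply: eq_bigr => i _; rewrite spZl. Qed.

Lemma re_sp_epsMl x y : epsM x -> re (sp x y) = 0.
Proof. by case=> z ->; rewrite spZl reM re_deps mul0r. Qed.

Lemma epsM0 : epsM (0 : M). Proof. by exists 0; rewrite scaler0. Qed.
Lemma epsM_scale x : epsM (deps R *: x). Proof. by exists x. Qed.
Lemma epsMD x y : epsM x -> epsM y -> epsM (x + y).
Proof. by case=> a -> [b ->]; exists (a + b); rewrite scalerDr. Qed.
Lemma epsMB x y : epsM x -> epsM y -> epsM (x - y).
Proof. by move=> ex [b ->]; apply: epsMD => //; exists (- b); rewrite scalerN. Qed.

Definition spans (n : 'I_3 -> M) := forall x, exists c : 'I_3 -> D, x = \sum_i c i *: n i.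

Section OrthonormalBasis.
Variable n : 'I_3 -> M.
Hypothesis n_on : Defs.orthonormal sp n.
Hypothesis n_span : spans n.

Lemma sp_comb (c : 'I_3 -> D) j : sp (\sum_i c i *: n i) (n j) = c j.
Proof.
by rewrite sp_suml -[RHS](sum_delta c j); apply: eq_bigr => i _; rewrite spZl n_on mulrC.
Qed.

Lemma coordE x : x = \sum_i sp x (n i) *: n i.
Proof. by have [c ->] := n_span x; apply: eq_bigr => j _; rewrite sp_comb. Qed.

Lemma coord_inj x y : (forall i, sp x (n i) = sp y (n i)) -> x = y.
Proof. by move=> eq_xy; rewrite (coordE x) (coordE y); apply: eq_bigr => i _; rewrite eq_xy. Qed.

Lemma sp_coordE x y : sp x y = \sum_i sp x (n i) * sp y (n i).
Proof. by rewrite {1}(coordE x) sp_suml; apply: eq_bigr => i _; rewrite spZl [sp (n i) y]spC. Qed.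

Lemma epsM_coordP x : epsM x <-> forall i, re (sp x (n i)) = 0.
Proof.
split=> [ex i|re0]; first exact: re_sp_epsMl.
exists (\sum_i dR (du (sp x (n i))) *: n i).
rewrite {1}(coordE x) scaler_sumr; apply: eq_bigr => i _.
by rewrite scalerA {1}(dual_decomp (sp x (n i))) re0 dR0 add0r.
Qed.

Lemma cross_coord x y k : sp (cross sp n x y) (n k) =
  \sum_i \sum_j sp x (n i) * sp y (n j) * dR (levi R i j k).
Proof.
rewrite /cross sp_suml; apply: eq_bigr => i _; rewrite sp_suml.
by apply: eq_bigr => j _; rewrite sp_comb.
Qed.

Ltac expand_coords := rewrite /ad; do 4 (rewrite ?cross_coord ?spE ?sum3E);
  rewrite ?n_on ?eq_o3E ?eqxx !leviE /= ?dR0 ?dR1 ?dRN1.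

Lemma ad_linear x a y y' : ad sp n x (a *: y + y') = a *: ad sp n x y + ad sp n x y'.
Proof. by apply: coord_inj => k; case3 k; expand_coords; ring. Qed.

Lemma ad_antisym x y z : sp (ad sp n x y) z = - sp y (ad sp n x z).
Proof. by rewrite (sp_coordE (ad sp n x y)) (sp_coordE y); expand_coords; ring. Qed.

Lemma ad_linear_l a x1 x2 y : ad sp n (a *: x1 + x2) y = a *: ad sp n x1 y + ad sp n x2 y.
Proof. by apply: coord_inj => k; case3 k; expand_coords; ring. Qed.

Lemma ad_cross x1 x2 y : ad sp n (- cross sp n x1 x2) y =
  ad sp n x1 (ad sp n x2 y) - ad sp n x2 (ad sp n x1 y).
Proof. by apply: coord_inj => k; case3 k; expand_coords; ring. Qed.

Lemma ad_inj x1 x2 : ad sp n x1 =1 ad sp n x2 -> x1 = x2.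
Proof.
move=> eq_ad; apply: coord_inj => i.
have eq_coord j k : sp (ad sp n x1 (n j)) (n k) = sp (ad sp n x2 (n j)) (n k).
  by rewrite eq_ad.
by case3 i; [move: (eq_coord o1 o2) | move: (eq_coord o2 o0) | move: (eq_coord o0 o1)];
  expand_coords; rewrite !(mulr0, mul0r, mulr1, addr0, add0r) => /oppr_inj.
Qed.

Section SkewOperator.
Variable f : M -> M.
Hypothesis f_so3 : is_so3 sp f.

Lemma so3_coordE y : f y = \sum_j sp y (n j) *: f (n j).
Proof.
case: f_so3 => f_lin _.
have f0 : f 0 = 0.
  have := f_lin 1 0 0; rewrite !scale1r !addr0.
  by move=> /(congr1 (fun t => t - f 0)); rewrite addrK subrr => <-.
have fD u v : f (u + v) = f u + f v by rewrite -[u]scale1r f_lin !scale1r.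
have fZ a u : f (a *: u) = a *: f u by rewrite -[a *: u]addr0 f_lin f0 addr0.
by rewrite {1}(coordE y) !sum3E !fD !fZ.
Qed.

Lemma so3_skew j k : sp (f (n j)) (n k) = - sp (f (n k)) (n j).
Proof. by case: f_so3 => _ f_anti; rewrite f_anti spC. Qed.

Lemma so3_diag j : sp (f (n j)) (n j) = 0.
Proof. exact/dual_eqN/so3_skew. Qed.

Lemma so3_ad : f =1 ad sp n (- sp (f (n o1)) (n o2) *: n o0
  - sp (f (n o2)) (n o0) *: n o1 - sp (f (n o0)) (n o1) *: n o2).
Proof.
move=> y; apply: coord_inj => k; rewrite so3_coordE.
case3 k; expand_coords;
  rewrite ?(so3_skew o1 o0) ?(so3_skew o0 o2) ?(so3_skew o2 o1) ?so3_diag; ring.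
Qed.

End SkewOperator.

End OrthonormalBasis.

Lemma piV_eqP x y : piV x = piV y <-> epsM (x - y).
Proof.
split=> [/(congr1 sval) /= eq_coset | exy].
  have : coset x x by rewrite /coset /= subrr; exact: epsM0.
  by rewrite eq_coset.
apply: exist_eq; apply/funext => w; apply/propext; rewrite /coset; split => ew.
  by have := epsMD ew exy; rewrite addrA subrK.
by have := epsMB ew exy; rewrite opprB addrA subrK.
Qed.

Lemma reprVK (v : V M) : piV (reprV v) = v.
Proof.
apply: (@the_spec _ 0 (fun x => piV x = v)).
by case: v => S [x Sx]; exists x; apply: exist_eq.
Qed.

Lemma piV_comb_reprV (c : 'I_3 -> D) (p : 'I_3 -> M) :
  piV (\sum_k c k *: reprV (piV (p k))) = piV (\sum_k c k *: p k).
Proof.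
apply/piV_eqP; rewrite -sumrB.
apply: (big_ind (fun x => epsM x)) => [|x y|k _]; [exact: epsM0 | exact: epsMD |].
have /piV_eqP [y y_eq] := reprVK (piV (p k)).
by rewrite -scalerBr y_eq scalerA mulrC -scalerA; exact: epsM_scale.
Qed.

Lemma re_sp_piV x y z : piV x = piV y -> re (sp x z) = re (sp y z).
Proof. by move=> /piV_eqP /(re_sp_epsMl z); rewrite spBl reD reN => /subr0_eq. Qed.

Lemma vdot_piV x y : vdot sp (piV x) (piV y) = re (sp x y).
Proof. by rewrite /vdot (re_sp_piV _ (reprVK _)) spC (re_sp_piV _ (reprVK _)) spC. Qed.

Lemma real_span_mem (q : 'I_3 -> M) i : real_span q (q i).
Proof.
exists (fun k => (k == i)%:R).
by rewrite -{1}(sum_delta_scale q i); apply: eq_bigr => k _; rewrite dR_nat.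
Qed.

Section Point.
Variable P : E sp.
Local Notation S := (sval P).

Lemma point_span : exists p, real_indep p /\ S = real_span p.
Proof. by case: P => /= S0 [[p [p_indep ->]] _]; exists p. Qed.

Lemma point_lin r x y : S x -> S y -> S (dR r *: x + y).
Proof.
have [p [_ ->]] := point_span; case=> c -> [c' ->].
exists (fun i => r * c i + c' i); rewrite scaler_sumr -big_split /=.
by apply: eq_bigr => i _; rewrite scalerA -dRM -scalerDl -dRD.
Qed.

Lemma point0 : S 0.
Proof.
by have [p [_ ->]] := point_span; exists (fun _ => 0); rewrite big1 // => i _; rewrite scale0r.
Qed.

Lemma point_comb (q : 'I_3 -> M) (c : 'I_3 -> R) :
  (forall i, S (q i)) -> S (\sum_i dR (c i) *: q i).
Proof.
move=> Sq; apply: (big_ind S) => [|x y Sx Sy|i _]; first exact: point0.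
  by have := point_lin 1 Sx Sy; rewrite dR1 scale1r.
by rewrite -[_ *: _]addr0; apply: point_lin => //; exact: point0.
Qed.

Lemma point_du x y : S x -> S y -> du (sp x y) = 0.
Proof. by case: P => /= S0 [_ [S0_du _]]; apply: S0_du. Qed.

Lemma point_epsM x : S x -> epsM x -> x = 0.
Proof. by case: P => /= S0 [_ [_ S0_eps]]; apply: S0_eps. Qed.

Lemma point_piV_inj x y : S x -> S y -> piV x = piV y -> x = y.
Proof.
move=> Sx Sy /piV_eqP exy; apply/eqP; rewrite -subr_eq0; apply/eqP/point_epsM => //.
by have := point_lin (-1) Sy Sx; rewrite dRN1 scaleN1r addrC.
Qed.

End Point.

Lemma orthonormal_point q : Defs.orthonormal sp q -> is_point sp (real_span q).
Proof.
move=> q_on; have sp_q (c : 'I_3 -> R) j : sp (\sum_i dR (c i) *: q i) (q j) = dR (c j).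
  exact: sp_comb.
split; [exists q; split => // | split].
- by move=> c c0 i; have := sp_q c i; rewrite c0 sp0l => /(congr1 (@re R)).
- move=> x y [c ->] [c' ->]; rewrite sp_sumr du_sum big1 // => j _.
  by rewrite spZr sp_q duM !du_dR mulr0 mul0r addr0.
- move=> x [c ->] ex; rewrite big1 // => i _.
  by have := re_sp_epsMl (q i) ex; rewrite sp_q re_dR => ->; rewrite scale0r.
Qed.

Section Lifts.
Variable m : 'I_3 -> M.
Hypothesis m_on : Defs.orthonormal sp m.
Hypothesis m_span : spans m.

Definition transition (q : 'I_3 -> M) : 'M[D]_3 := \matrix_(i, a) sp (q i) (m a).

Lemma transition_orthogonal q : Defs.orthonormal sp q ->
  transition q *m (transition q)^T = 1%:M.
Proof.
move=> q_on; apply/matrixP => i j; rewrite !mxE -(q_on i j) (sp_coordE m_on m_span).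
by apply: eq_bigr => a _; rewrite !mxE.
Qed.

Lemma orthonormal_spans q : Defs.orthonormal sp q -> spans q.
Proof.
move=> q_on x; exists (fun i => sp x (q i)); apply/eqP; rewrite -subr_eq0; apply/eqP.
set w := x - _.
have wq i : sp w (q i) = 0 by rewrite /w spBl (sp_comb q_on) subrr.
pose W : 'cV[D]_3 := \col_a sp w (m a).
have TW : transition q *m W = 0.
  apply/matrixP => i j; rewrite !mxE; transitivity (sp w (q i)); last exact: wq.
  rewrite (spC w) (sp_coordE m_on m_span (q i)).
  by apply: eq_bigr => a _; rewrite !mxE.
have W0 : W = 0 by rewrite -[W]mul1mx -(mulmx1C (transition_orthogonal q_on)) -mulmxA TW mulmx0.
apply: (coord_inj m_on m_span) => a.
by rewrite sp0l; have := congr1 (fun N : 'cV[D]_3 => N a 0) W0; rewrite !mxE.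
Qed.

Lemma lift_exists (P : E sp) (v : V M) : exists x, sval P x /\ piV x = v.
Proof.
have [p [p_indep SP]] := point_span P.
pose Pm : 'M[R]_3 := \matrix_(i, a) re (sp (p i) (m a)).
have re_coord (c : 'rV[R]_3) a :
    re (sp (\sum_i dR (c 0 i) *: p i) (m a)) = (c *m Pm) 0 a.
  by rewrite re_sp_real_comb !mxE; apply: eq_bigr => i _; rewrite mxE.
have Pp i : sval P (p i) by rewrite SP; exact: real_span_mem.
have Pm_unit : Pm \in unitmx.
  rewrite unitmxE unitfE; apply/negP => /det0P [c c_neq0 cPm0].
  have c0 : forall i, c 0 i = 0.
    apply: (p_indep (fun i => c 0 i)); apply: (point_epsM (P := P)); first exact: point_comb.
    by apply/(epsM_coordP m_on m_span) => a; rewrite re_coord cPm0 mxE.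
  by move/eqP: c_neq0; apply; apply/rowP => i; rewrite c0 mxE.
pose c := \row_a re (sp (reprV v) (m a)) *m invmx Pm.
exists (\sum_i dR (c 0 i) *: p i); split; first exact: point_comb.
rewrite -[v]reprVK; apply/piV_eqP/(epsM_coordP m_on m_span) => a.
by rewrite spBl reD reN re_coord /c mulmxKV // mxE subrr.
Qed.

Lemma liftE_spec (P : E sp) v : sval P (liftE sp P v) /\ piV (liftE sp P v) = v.
Proof. exact/(@the_spec _ 0 (fun x => sval P x /\ piV x = v))/lift_exists. Qed.

Lemma liftE_eq (P : E sp) v x : sval P x -> piV x = v -> liftE sp P v = x.
Proof.
move=> Px xv; have [Pl lv] := liftE_spec P v.
by apply: (point_piV_inj Pl Px); rewrite lv xv.
Qed.

Definition P0 : E sp := exist _ (real_span m) (orthonormal_point m_on).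

Variable e : 'I_3 -> V M.
Hypothesis e_on : forall i j, vdot sp (e i) (e j) = (i == j)%:R.

Definition frame (P : E sp) i := liftE sp P (e i).
Definition vcoord (v : V M) i := vdot sp v (e i).

Lemma frame_in P i : sval P (frame P i). Proof. exact: (liftE_spec P (e i)).1. Qed.
Lemma frame_piV P i : piV (frame P i) = e i. Proof. exact: (liftE_spec P (e i)).2. Qed.

Lemma frame_on P : Defs.orthonormal sp (frame P).
Proof.
move=> i j; apply: dual_eq; last by rewrite (point_du (frame_in P i) (frame_in P j)) du_nat.
by rewrite -vdot_piV !frame_piV e_on re_nat.
Qed.

Lemma frame_span P : spans (frame P). Proof. exact/orthonormal_spans/frame_on. Qed.

Lemma vcoord_piV P x i : vcoord (piV x) i = re (sp x (frame P i)).
Proof. by rewrite /vcoord -(frame_piV P i) vdot_piV. Qed.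

Lemma vcoord_reprV P u i : vcoord u i = re (sp (reprV u) (frame P i)).
Proof. by rewrite -{1}(reprVK u) (vcoord_piV P). Qed.

Lemma vcoord_inj u v : (forall i, vcoord u i = vcoord v i) -> u = v.
Proof.
move=> eq_uv; rewrite -(reprVK u) -(reprVK v); apply/piV_eqP.
apply/(epsM_coordP (frame_on P0) (frame_span P0)) => i.
by rewrite spBl reD reN -!(vcoord_reprV P0) eq_uv subrr.
Qed.

Lemma vcoord_vadd u v i : vcoord (vadd u v) i = vcoord u i + vcoord v i.
Proof. by rewrite (vcoord_piV P0) spDl reD -!(vcoord_reprV P0). Qed.
Lemma vcoord_vsub u v i : vcoord (vsub u v) i = vcoord u i - vcoord v i.
Proof. by rewrite (vcoord_piV P0) spBl reD reN -!(vcoord_reprV P0). Qed.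
Lemma vcoord_vscale r u i : vcoord (vscale r u) i = r * vcoord u i.
Proof. by rewrite (vcoord_piV P0) spZl reM re_dR -!(vcoord_reprV P0). Qed.
Lemma vcoord_vcomb c i : vcoord (vcomb c e) i = c i.
Proof.
rewrite (vcoord_piV P0) re_sp_real_comb -[RHS](sum_delta c i).
by apply: eq_bigr => k _; rewrite -(vcoord_reprV P0) /vcoord e_on mulrC.
Qed.
Lemma vcoord_vcross u v k : vcoord (vcross sp e u v) k =
  \sum_i \sum_j vcoord u i * vcoord v j * levi R i j k.
Proof. exact: vcoord_vcomb. Qed.

Lemma beta_decomp z P :
  exists a x, sval P a /\ piV x = beta sp z P /\ z = a + deps R *: x.
Proof.
apply: (@the_spec _ (piV 0) (fun v => exists a x, sval P a /\ piV x = v /\ z = a + deps R *: x)).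
pose zc k := sp z (frame P k).
exists (piV (\sum_k dR (du (zc k)) *: frame P k)).
exists (\sum_k dR (re (zc k)) *: frame P k), (\sum_k dR (du (zc k)) *: frame P k).
split; first by apply: point_comb => k; apply: frame_in.
split => //; apply: (coord_inj (frame_on P) (frame_span P)) => j.
by rewrite spDl spZl !(sp_comb (frame_on P)) -dual_decomp.
Qed.

Lemma vcoord_beta z P i : vcoord (beta sp z P) i = du (sp z (frame P i)).
Proof.
have [a [x [Pa [<- ->]]]] := beta_decomp z P.
rewrite (vcoord_piV P) spDl spZl duD duM (point_du Pa (frame_in P i)).
by rewrite re_deps du_deps mul0r mul1r !add0r.
Qed.

Definition perturb (A : E sp) (W : 'I_3 -> 'I_3 -> R) i :=
  frame A i + deps R *: \sum_j dR (W i j) *: frame A j.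

Lemma sp_perturb_frame A W i j :
  sp (perturb A W i) (frame A j) = (i == j)%:R + deps R * dR (W i j).
Proof. by rewrite spDl spZl (sp_comb (frame_on A)) frame_on. Qed.

Lemma perturb_inj A W W' : perturb A W =1 perturb A W' -> forall i j, W i j = W' i j.
Proof.
move=> eq_W i j; have := sp_perturb_frame A W i j; rewrite eq_W sp_perturb_frame.
by move=> /(congr1 (@du R)); rewrite !dualE !(mul0r, mul1r, add0r).
Qed.

Lemma piV_perturb A W i : piV (perturb A W i) = e i.
Proof.
by rewrite -(frame_piV A i); apply/piV_eqP; rewrite /perturb addrC addKr; exact: epsM_scale.
Qed.

Lemma perturb_orthonormalP A W :
  Defs.orthonormal sp (perturb A W) <-> forall i j, W i j + W j i = 0.
Proof.
have sp_perturb i j : sp (perturb A W i) (perturb A W j) =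
    (i == j)%:R + deps R * dR (W j i + W i j).
  rewrite (sp_coordE (frame_on A) (frame_span A)) -sum_delta_eps_mul.
  by apply: eq_bigr => k _; rewrite !sp_perturb_frame.
split=> [W_on i j | W_anti i j].
  have := W_on i j; rewrite sp_perturb => /(congr1 (@du R)).
  by rewrite !dualE !(mul0r, mul1r, add0r, addr0) addrC.
by rewrite sp_perturb W_anti dR0 mulr0 addr0.
Qed.

Lemma frame_perturb A B : frame B =1 perturb A (fun i j => du (sp (frame B i) (frame A j))).
Proof.
move=> i; apply: (coord_inj (frame_on A) (frame_span A)) => j.
rewrite sp_perturb_frame; apply: dual_eq; last by rewrite !dualE !(mul0r, mul1r, add0r).
by rewrite -vdot_piV !frame_piV e_on !dualE mul0r addr0.
Qed.

Lemma dvec_spec A B : frame B =1 perturb A (skew (dvec sp e B A)).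
Proof.
have perturb_levi d i : \sum_j \sum_k dR (levi R i j k * d k) *: frame A j =
    \sum_j dR (skew d i j) *: frame A j.
  by apply: eq_bigr => j _; rewrite -scaler_suml -dR_sum.
suff dvecP : forall i, frame B i =
    frame A i + deps R *: \sum_j \sum_k dR (levi R i j k * dvec sp e B A k) *: frame A j.
  by move=> i; rewrite dvecP /perturb perturb_levi.
pose W i j := du (sp (frame B i) (frame A j)).
have [d W_skew] : exists d, forall i j, W i j = skew d i j.
  apply/antisym_skew/(perturb_orthonormalP A) => i j.
  by rewrite /W -!(frame_perturb A B); exact: frame_on.
apply: (@the_spec _ (fun _ => 0) (fun d => forall i, frame B i =
  frame A i + deps R *: \sum_j \sum_k dR (levi R i j k * d k) *: frame A j)).
exists d => i; rewrite perturb_levi (frame_perturb A B i) /perturb.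
by congr (_ + _ *: _); apply: eq_bigr => j _; rewrite -W_skew.
Qed.

Lemma sp_frame_dvec A B i j :
  sp (frame B i) (frame A j) = (i == j)%:R + deps R * dR (skew (dvec sp e B A) i j).
Proof. by rewrite (dvec_spec A) sp_perturb_frame. Qed.

Lemma vcoord_diffE A B i : vcoord (diffE sp e B A) i = dvec sp e B A i.
Proof. exact: vcoord_vcomb. Qed.

Lemma vcoord_vcross_diffE r P Q i : vcoord (vcross sp e r (diffE sp e Q P)) i =
  \sum_a \sum_b vcoord r a * dvec sp e Q P b * levi R a b i.
Proof.
rewrite vcoord_vcross; apply: eq_bigr => a _; apply: eq_bigr => b _.
by rewrite vcoord_diffE.
Qed.

Definition perturbed_point A d : E sp :=
  exist _ _ (orthonormal_point (proj2 (perturb_orthonormalP A (skew d)) (skew_antisym d))).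

Lemma frame_perturbed_point A d : frame (perturbed_point A d) =1 perturb A (skew d).
Proof. by move=> i; apply: liftE_eq; [exact: real_span_mem | exact: piV_perturb]. Qed.

Lemma dvec_perturbed_point A d : dvec sp e (perturbed_point A d) A = d.
Proof.
apply/skew_inj/(perturb_inj (A := A)) => i.
by rewrite -(dvec_spec A) frame_perturbed_point.
Qed.

Lemma diffE_transl A v : diffE sp e (transl sp e A v) A = v.
Proof.
apply: (@the_spec _ A (fun Q => diffE sp e Q A = v)).
exists (perturbed_point A (vcoord v)); apply: vcoord_inj => i.
by rewrite vcoord_diffE dvec_perturbed_point.
Qed.

Lemma vcoord_beta_sub z P Q i : vcoord (beta sp z Q) i - vcoord (beta sp z P) i =
  \sum_a \sum_b vcoord (piV z) a * dvec sp e Q P b * levi R a b i.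
Proof.
rewrite !vcoord_beta spC (sp_coordE (frame_on P) (frame_span P) (frame Q i)).
under eq_bigr => j _ do rewrite sp_frame_dvec.
under [RHS]eq_bigr => a _ do rewrite (vcoord_piV P).
rewrite /skew !sum3E; case3 i; rewrite ?eq_o3E ?eqxx !dualE !leviE /=; ring.
Qed.

Lemma beta_screw z : is_screw sp e (beta sp z).
Proof.
exists (piV z) => P Q; apply: vcoord_inj => i.
by rewrite vcoord_vsub vcoord_vcross_diffE vcoord_beta_sub.
Qed.

Lemma beta_linear r z1 z2 A :
  beta sp (dR r *: z1 + z2) A = vadd (vscale r (beta sp z1 A)) (beta sp z2 A).
Proof.
apply: vcoord_inj => i; rewrite vcoord_vadd vcoord_vscale !vcoord_beta spDl spZl.
by rewrite duD duM re_dR du_dR mul0r addr0.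
Qed.

Lemma beta_inj z1 z2 : beta sp z1 =1 beta sp z2 -> z1 = z2.
Proof.
move=> eq_beta.
have eq_cross d i : \sum_a \sum_b vcoord (piV z1) a * d b * levi R a b i =
    \sum_a \sum_b vcoord (piV z2) a * d b * levi R a b i.
  have := vcoord_beta_sub z1 P0 (perturbed_point P0 d) i.
  by rewrite dvec_perturbed_point !eq_beta vcoord_beta_sub dvec_perturbed_point.
have eq_re a : vcoord (piV z1) a = vcoord (piV z2) a.
  by case3 a; [move: (eq_cross (fun b => (b == o1)%:R) o2)
             | move: (eq_cross (fun b => (b == o2)%:R) o0)
             | move: (eq_cross (fun b => (b == o0)%:R) o1)];
    rewrite !sum3E ?eq_o3E ?eqxx !leviE /=; lra.
apply: (coord_inj (frame_on P0) (frame_span P0)) => i; apply: dual_eq.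
  by rewrite -!(vcoord_piV P0) eq_re.
by rewrite -!vcoord_beta eq_beta.
Qed.

Lemma beta_surj s : is_screw sp e s -> exists z, s =1 beta sp z.
Proof.
case=> r s_screw.
pose z := \sum_i (dR (vcoord r i) + deps R * dR (vcoord (s P0) i)) *: frame P0 i.
have z_coord i : sp z (frame P0 i) = dR (vcoord r i) + deps R * dR (vcoord (s P0) i).
  exact: (sp_comb (frame_on P0)).
have z_re : piV z = r.
  by apply: vcoord_inj => a; rewrite (vcoord_piV P0) z_coord !dualE mul0r addr0.
have z_du : beta sp z P0 = s P0.
  by apply: vcoord_inj => a; rewrite vcoord_beta z_coord !dualE mul0r mul1r !add0r.
exists z => Q; apply: vcoord_inj => i.
have := vcoord_beta_sub z P0 Q i; rewrite z_re z_du.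
have := congr1 (vcoord^~ i) (s_screw P0 Q); rewrite /= vcoord_vsub vcoord_vcross_diffE.
lra.
Qed.

Lemma vderiv_beta z P v : vderiv sp e (beta sp z) P v (vcross sp e (piV z) v).
Proof.
rewrite /vderiv; set F := (fun t : R => _).
suff -> : F = fun=> 0 by exact: cvg_cst.
apply/funext => t; rewrite /F.
(* beta z is affine along lines, so the difference quotient vanishes identically *)
have -> : vsub (vsub (beta sp z (transl sp e P (vscale t v))) (beta sp z P))
    (vscale t (vcross sp e (piV z) v)) = piV 0.
  apply: vcoord_inj => i; rewrite (vcoord_piV P) sp0l re0 !vcoord_vsub vcoord_vscale.
  rewrite vcoord_vcross vcoord_beta_sub.
  under eq_bigr do under eq_bigr do rewrite -vcoord_diffE diffE_transl vcoord_vscale.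
  by rewrite !sum3E; ring.
by rewrite /vnorm vdot_piV sp0l sqrtr0 mul0r.
Qed.

Lemma cross_transition n : Defs.orthonormal sp n -> forall x y,
  cross sp n x y = \det (transition n) *: cross sp m x y.
Proof.
move=> n_on x y; apply: (coord_inj m_on m_span) => c.
rewrite spZl cross_coord // /cross !sum3E !spE.
rewrite !(sp_coordE m_on m_span _ (n _)) !sum3E det3E !mxE.
by case3 c; rewrite !leviE /= ?dR0 ?dR1 ?dRN1; ring.
Qed.

Lemma det_transition_eq1 n : Defs.orthonormal sp n ->
  0 < re (\det (transition n)) -> \det (transition n) = 1.
Proof.
move=> n_on det_gt0; apply: dual_sqr_eq1 => //.
by have := congr1 determinant (transition_orthogonal n_on); rewrite det_mulmx det_tr det1.
Qed.

Lemma re_transition_comb (p q : 'I_3 -> M) (C : 'M[D]_3) :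
  (forall j, piV (q j) = piV (\sum_k C j k *: p k)) ->
  map_mx (@re R) (transition q) = map_mx (@re R) C *m map_mx (@re R) (transition p).
Proof.
move=> q_comb; apply/matrixP => j a; rewrite !mxE (re_sp_piV _ (q_comb j)) sp_suml re_sum.
by apply: eq_bigr => k _; rewrite spZl !mxE.
Qed.

Section Orientation.
Variables (OR : set ('I_3 -> M)) (b0 : 'I_3 -> M).
Hypothesis OR_b0 : OR = [set b | is_basis b /\ same_orientation b0 b].
Hypothesis m_OR : OR m.
Hypothesis e_OR : exists b, OR b /\ exists A : 'M[R]_3,
  0 < \det A /\ forall j, e j = vcomb (fun k => A j k) (fun k => piV (b k)).

Lemma re_transition_OR b : OR b -> exists2 C : 'M[R]_3,
  0 < \det C & map_mx (@re R) (transition b) = C *m map_mx (@re R) (transition b0).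
Proof.
by rewrite OR_b0 => -[_ [A [b_A det_A]]]; exists (map_mx (@re R) A);
  last by apply: re_transition_comb => j; rewrite b_A.
Qed.

Lemma det_re_transition_b0_gt0 : 0 < \det (map_mx (@re R) (transition b0)).
Proof.
have [C det_C m_C] := re_transition_OR m_OR.
have re_m : map_mx (@re R) (transition m) = 1%:M.
  by apply/matrixP => i j; rewrite !mxE m_on re_nat.
have /(congr1 determinant) := m_C; rewrite re_m det1 det_mulmx => det_eq.
by rewrite -(pmulr_rgt0 _ det_C) -det_eq ltr01.
Qed.

Lemma det_re_transition_frame_gt0 P : 0 < \det (map_mx (@re R) (transition (frame P))).
Proof.
have [b [b_OR [A [det_A e_A]]]] := e_OR.
have [C det_C b_C] := re_transition_OR b_OR.
have -> : map_mx (@re R) (transition (frame P)) = A *m map_mx (@re R) (transition b).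
  have -> : A = map_mx (@re R) (map_mx (@dR R) A) by apply/matrixP => i j; rewrite !mxE.
  apply: re_transition_comb => j; rewrite frame_piV e_A /vcomb piV_comb_reprV.
  by congr piV; apply: eq_bigr => k _; rewrite mxE.
by rewrite b_C !det_mulmx !mulr_gt0 // det_re_transition_b0_gt0.
Qed.

Lemma cross_frame P x y : cross sp m x y = cross sp (frame P) x y.
Proof.
rewrite (cross_transition (frame_on P)) det_transition_eq1 ?scale1r //; first exact: frame_on.
by rewrite re_det3; exact: det_re_transition_frame_gt0.
Qed.

Lemma beta_lie_bracket z1 z2 :
  lie_bracket sp e (beta sp z1) (beta sp z2) (beta sp (- cross sp m z1 z2)).
Proof.
move=> P; exists (vcross sp e (piV z2) (beta sp z1 P)), (vcross sp e (piV z1) (beta sp z2 P)).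
split; [exact: vderiv_beta | split; first exact: vderiv_beta].
apply: vcoord_inj => i; rewrite vcoord_vsub !vcoord_vcross vcoord_beta (cross_frame P).
rewrite spNl (cross_coord (frame_on P)) !sum3E !vcoord_beta !(vcoord_piV P).
by case3 i; rewrite !leviE !dualE /=; ring.
Qed.

End Orientation.
End Lifts.
End ScalarProduct.

Theorem proposition8 (R : realType) (M : lmodType (dual R))
  (sp : M -> M -> dual R) (OR : set ('I_3 -> M)) :
  free_rank3 M -> is_scalar_product sp -> is_orientation OR ->
  forall (m : 'I_3 -> M) (e : 'I_3 -> V M),
  pos_orthonormal sp OR m -> pos_orthonormal_V sp OR e ->
  (* (1)  x |-> -x \times .  is a Lie algebra isomorphism (M, -\times) ~ so(3,D) *)
  [/\ forall x : M, is_so3 sp (ad sp m x),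
      forall x1 x2 : M, ad sp m x1 =1 ad sp m x2 -> x1 = x2,
      forall f : M -> M, is_so3 sp f -> exists x : M, f =1 ad sp m x,
      forall (a : dual R) (x1 x2 : M),
        ad sp m (a *: x1 + x2) =1 (fun y => a *: ad sp m x1 y + ad sp m x2 y) &
      forall x1 x2 : M,
        ad sp m (- cross sp m x1 x2) =1
          (fun y => ad sp m x1 (ad sp m x2 y) - ad sp m x2 (ad sp m x1 y))] /\
  (* (2)  beta is a Lie algebra isomorphism (M, -\times) ~ se(3), hence so is
          beta composed with the inverse of (1) from so(3,D) to se(3) *)
  [/\ forall z : M, is_screw sp e (beta sp z),
      forall z1 z2 : M, beta sp z1 =1 beta sp z2 -> z1 = z2,
      forall s : E sp -> V M, is_screw sp e s -> exists z : M, s =1 beta sp z,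
      forall (r : R) (z1 z2 : M),
        beta sp (dR r *: z1 + z2) =1 (fun A => vadd (vscale r (beta sp z1 A)) (beta sp z2 A)) &
      forall z1 z2 : M,
        lie_bracket sp e (beta sp z1) (beta sp z2) (beta sp (- cross sp m z1 z2))].
Proof.
move=> _ sp_sp [b0 [_ OR_b0]] m e [m_OR m_on] [e_on e_OR].
have m_span : spans m by move: m_OR; rewrite OR_b0 => -[[]].
split; split.
- by move=> x; split; [exact: ad_linear | exact: ad_antisym].
- exact: ad_inj.
- by move=> f f_so3; eexists; exact: so3_ad.
- exact: ad_linear_l.
- exact: ad_cross.
- exact: beta_screw.
- exact: beta_inj.
- exact: beta_surj.
- exact: beta_linear.
- exact: (beta_lie_bracket sp_sp m_on m_span e_on OR_b0).
Qed.
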